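(* For all integers $n\geq 1$ and $1\le i\le\lfloor n/2\rfloor$, we have $(i+1)\gamma_i(B_{n-1})\le\gamma_i(B_n)$.
   Context: $B_n$ denotes the group of signed permutations: bijections $\sigma$ of $\{\pm1,\dots,\pm n\}$ with $\sigma(-i)=-\sigma(i)$, written $\sigma=\sigma_1\cdots\sigma_n$ with $\sigma_i=\sigma(i)$. With $\sigma_0=0$, $\mathrm{des}_B(\sigma)=|\{i\in\{0,\dots,n-1\}:\sigma_i>\sigma_{i+1}\}|$. The type $B$ Eulerian polynomial $B_n(t)=\sum_{\sigma\in B_n}t^{\mathrm{des}_B(\sigma)}$ satisfies $B_n(t)=t^nB_n(1/t)$, so $B_n(t)=\sum_{i=0}^{\lfloor n/2\rfloor}\gamma_i(B_n)t^i(1+t)^{n-2i}$ for unique integers $\gamma_i(B_n)$; set $\gamma_i(B_n)=0$ for $i>\lfloor n/2\rfloor$. *)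

From HB Require Import structures.
From mathcomp Require Import all_boot all_order all_fingroup all_algebra.
From Stdlib Require Import ClassicalEpsilon.
Set Implicit Arguments. Unset Strict Implicit. Unset Printing Implicit Defensive.
Import Order.TTheory GRing.Theory Num.Theory.
Local Open Scope ring_scope.

(* The signed letters {±1,...,±n}: (k, b) encodes -(k+1) if b, else k+1. *)
Definition letter (n : nat) := ('I_n * bool)%type.

Definition letter_val (n : nat) (x : letter n) : int :=
  if x.2 then - (x.1.+1)%:Z else (x.1.+1)%:Z.

Definition letter_neg (n : nat) (x : letter n) : letter n := (x.1, ~~ x.2).

Definition Bn (n : nat) : {set {perm letter n}} :=
  [set s : {perm letter n} | [forall x : letter n, s (letter_neg x) == letter_neg (s x)]].

Definition sigmaB (n : nat) (s : {perm letter n}) (j : nat) : int :=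
  match j with
  | 0 => 0
  | j'.+1 => match (insub j' : option 'I_n) with
             | Some k => letter_val (s (k, false))
             | None => 0
             end
  end.

Definition desB (n : nat) (s : {perm letter n}) : nat :=
  #|[set i : 'I_n | sigmaB s (val i).+1 < sigmaB s (val i)]|.

Definition BEuler (n : nat) : {poly int} :=
  \sum_(s in Bn n) 'X^(desB s).

Definition is_gamma_vector (n : nat) (g : nat -> int) : Prop :=
  (forall i, (n./2 < i)%N -> g i = 0) /\
  BEuler n = \sum_(i < n./2.+1) (g i)%:P * ('X^i * (1 + 'X) ^+ (n - 2 * i)).

Definition gammaB (n : nat) : nat -> int :=
  epsilon (inhabits (fun _ : nat => 0 : int)) (is_gamma_vector n).

From mathcomp Require Import all_boot all_order all_fingroup all_algebra.
Import Order.TTheory GRing.Theory Num.Theory.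
Local Open Scope ring_scope.
From mathcomp Require Import ring zify.
From Stdlib Require Import ClassicalEpsilon.
Set Implicit Arguments. Unset Strict Implicit. Unset Printing Implicit Defensive.

(* Writing a signed permutation of [n+1] as a word and deleting the letter of
   absolute value n+1 shows that B_{n+1}(t) = (1 + (2n+1)t) B_n(t) + 2t(1-t) B_n'(t).
   Applied to the basis t^i (1+t)^(n-2i) this gives the recurrence
   gamma_{i+1}(B_{n+1}) = (2i+3) gamma_{i+1}(B_n) + 4(n-2i) gamma_i(B_n),
   so the gamma_i(B_n) are nonnegative integers with
   gamma_i(B_{n+1}) >= (2i+1) gamma_i(B_n) >= (i+1) gamma_i(B_n). *)

(** * The gamma recurrence *)

Definition eulerB_step (n : nat) (p : {poly int}) : {poly int} :=
  (1 + (2 * n + 1)%N%:R * 'X) * p + 2%:R * (1 - 'X) * ('X * p^`()).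

Lemma eulerB_step_sum n (I : Type) (r : seq I) (F : I -> {poly int}) :
  eulerB_step n (\sum_(i <- r) F i) = \sum_(i <- r) eulerB_step n (F i).
Proof.
elim: r => [|a r IHr]; rewrite ?big_nil ?big_cons.
  by rewrite /eulerB_step deriv0 !mulr0 addr0.
by rewrite -IHr /eulerB_step derivD !mulrDr addrACA.
Qed.

Lemma eulerB_step_natM n k p : eulerB_step n (k%:R * p) = k%:R * eulerB_step n p.
Proof.
rewrite /eulerB_step.
have -> : (k%:R * p)^`() = k%:R * p^`() by rewrite !mulr_natl derivMn.
by ring.
Qed.

Lemma X_derivXn (R : nzSemiRingType) k : 'X * ('X^k)^`() = k%:R * 'X^k :> {poly R}.
Proof.
rewrite derivXn; case: k => [|k]; first by rewrite mulr0n mulr0 mul0r.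
by rewrite /= mulrnAr -exprS mulr_natl.
Qed.

Lemma eulerB_step_Xn n k :
  eulerB_step n 'X^k = (2 * k + 1)%N%:R * 'X^k + ((2 * n + 1)%N%:R - (2 * k)%N%:R) * 'X^(k.+1).
Proof. by rewrite /eulerB_step /= X_derivXn exprS; ring. Qed.

Definition gamma_basis (n i : nat) : {poly int} := 'X^i * (1 + 'X) ^+ (n - 2 * i).

Lemma eulerB_step_basis n i : (2 * i <= n)%N ->
  eulerB_step n (gamma_basis n i) =
  (2 * i + 1)%N%:R * gamma_basis n.+1 i + (4 * (n - 2 * i))%N%:R * gamma_basis n.+1 i.+1.
Proof.
rewrite /gamma_basis => le2i_n; have [r ->] : exists r, n = (2 * i + r)%N.
  by exists (n - 2 * i)%N; lia.
rewrite (_ : 2 * i + r - 2 * i = r)%N; last by lia.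
rewrite (_ : (2 * i + r).+1 - 2 * i = r.+1)%N; last by lia.
have X_deriv : 'X * ('X^i * (1 + 'X) ^+ r)^`() =
    i%:R * 'X^i * (1 + 'X) ^+ r + r%:R * 'X * 'X^i * (1 + 'X) ^+ r.-1 :> {poly int}.
  have deriv_pow : ((1 + 'X) ^+ r)^`() = r%:R * (1 + 'X) ^+ r.-1 :> {poly int}.
    by rewrite deriv_exp derivD derivC derivX add0r mul1r mulr_natl.
  by rewrite derivM mulrDr mulrA X_derivXn deriv_pow; ring.
rewrite /eulerB_step /= X_deriv {X_deriv}.
case: r => [|r].
  by rewrite !addn0 muln0 /= expr1 expr0 !mul0r !addr0 !mulr1; ring.
rewrite (_ : (2 * i + r.+1).+1 - 2 * i.+1 = r)%N; last by lia.
by rewrite /= [(1 + 'X) ^+ r.+2]exprS [(1 + 'X) ^+ r.+1]exprS exprS; ring.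
Qed.

(* The truncated [n' - 2 * j] is harmless: [gammaN n' j = 0] whenever [n' < 2 * j]. *)
Fixpoint gammaN (n i : nat) : nat :=
  match n, i with
  | 0, _ => i == 0
  | n'.+1, 0 => gammaN n' 0
  | n'.+1, j.+1 => (2 * j + 3) * gammaN n' j.+1 + 4 * (n' - 2 * j) * gammaN n' j
  end%N.

Lemma gammaN_eq0 n i : (n./2 < i)%N -> gammaN n i = 0%N.
Proof.
rewrite ltn_half_double -muln2; elim: n i => [|n IHn] [|i] //= lt_n_2i.
have -> : (n - 2 * i = 0)%N by lia.
by rewrite IHn ?muln0 //; lia.
Qed.

Definition gamma_poly (n : nat) : {poly int} :=
  \sum_(0 <= i < n.+1) (gammaN n i)%:R * gamma_basis n i.

Lemma eulerB_step_gamma_term n i :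
  (gammaN n i)%:R * eulerB_step n (gamma_basis n i) =
  ((2 * i + 1) * gammaN n i)%N%:R * gamma_basis n.+1 i +
  (4 * (n - 2 * i) * gammaN n i)%N%:R * gamma_basis n.+1 i.+1.
Proof.
case: (leqP (2 * i) n) => [le_2i_n | lt_n_2i].
  by rewrite eulerB_step_basis // !natrM; ring.
by rewrite gammaN_eq0 ?muln0 ?mul0r ?addr0 // ltn_half_double -muln2; lia.
Qed.

Lemma gamma_poly_step n : eulerB_step n (gamma_poly n) = gamma_poly n.+1.
Proof.
rewrite /gamma_poly eulerB_step_sum.
under eq_bigr do rewrite eulerB_step_natM eulerB_step_gamma_term.
rewrite big_split /= [in RHS]big_nat_recl //=.
under [X in _ = _ + X]eq_bigr do rewrite natrD mulrDl.
rewrite big_split /= addrA; congr (_ + _).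
rewrite big_nat_recl // muln0 add0n mul1n; congr (_ + _).
rewrite big_nat_recr //= [gammaN n n.+1]gammaN_eq0 ?muln0 ?mul0r ?addr0; last first.
  by rewrite ltn_half_double -muln2; lia.
by apply: eq_bigr => i _; rewrite (_ : 2 * i.+1 + 1 = 2 * i + 3)%N; last lia.
Qed.

Lemma Xn_mul_triangular_free (R : nzSemiRingType) m (c : nat -> R) (q : nat -> {poly R}) :
  (forall i, (q i)`_0 = 1) -> \sum_(i < m) (c i)%:P * ('X^i * q i) = 0 ->
  forall k, (k < m)%N -> c k = 0.
Proof.
move=> q0 sum_eq0; elim/ltn_ind => k IHk lt_k_m.
have := congr1 (fun p : {poly R} => p`_k) sum_eq0.
rewrite coef0 coef_sum (bigD1 (Ordinal lt_k_m)) //= big1 ?addr0.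
  by rewrite coefCM coefXnM ltnn subnn q0 mulr1.
move=> i /eqP ne_ik; rewrite coefCM coefXnM; case: ltnP => [_|le_ik]; first by rewrite mulr0.
rewrite IHk ?mul0r ?ltn_ord // ltn_neqAle le_ik andbT.
by apply/eqP => eq_ik; apply: ne_ik; apply: val_inj.
Qed.

Lemma gamma_vector_unique n g1 g2 :
  is_gamma_vector n g1 -> is_gamma_vector n g2 -> g1 =1 g2.
Proof.
move=> [g1_eq0 g1E] [g2_eq0 g2E] k.
have [lt_half_k | le_k_half] := ltnP n./2 k; first by rewrite g1_eq0 ?g2_eq0.
have sum_eq0 : \sum_(i < n./2.+1) (g1 i - g2 i)%:P * ('X^i * (1 + 'X) ^+ (n - 2 * i)) = 0.
  transitivity (BEuler n - BEuler n); last exact: subrr.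
  rewrite {1}g1E g2E -sumrB.
  by apply: eq_bigr => i _; rewrite polyCB mulrBl.
apply/eqP; rewrite -subr_eq0; apply/eqP.
apply: (@Xn_mul_triangular_free _ _ (fun i => g1 i - g2 i)
          (fun i => (1 + 'X) ^+ (n - 2 * i)) _ sum_eq0 _ le_k_half) => i.
by rewrite -horner_coef0 horner_exp hornerD hornerC hornerX addr0 expr1n.
Qed.

Lemma gammaB_unique n g : is_gamma_vector n g -> gammaB n =1 g.
Proof.
move=> gv; apply: (gamma_vector_unique _ gv).
by rewrite /gammaB; apply: epsilon_spec; exists g.
Qed.

Lemma gamma_polyE n :
  gamma_poly n = \sum_(i < n./2.+1) ((gammaN n i)%:Z)%:P * ('X^i * (1 + 'X) ^+ (n - 2 * i)).
Proof.
have le_half_n : (n./2.+1 <= n.+1)%N by rewrite ltnS leq_half_double -muln2; lia.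
rewrite /gamma_poly (big_cat_nat (leq0n _) le_half_n) /= [X in _ + X]big_nat_cond.
rewrite [X in _ + X]big1 ?addr0.
  by rewrite big_mkord; apply: eq_bigr => i _; rewrite -natz polyC_natr.
by move=> i /andP [/andP [lt_half_i _] _]; rewrite gammaN_eq0 ?mul0r.
Qed.

(** * Signed words *)

Fixpoint descents (a : int) (w : seq int) : nat :=
  if w is x :: w' then ((x < a)%R + descents x w')%N else 0%N.

Definition insert (w : seq int) (j : nat) (x : int) : seq int := take j w ++ x :: drop j w.

Definition signed (b : bool) (m : nat) : int := if b then - m%:Z else m%:Z.

(* Inserting +-m into a descent slot of [a :: w] keeps the number of descents; into an
   ascent slot it adds one, and at the end only -m adds one. *)
Lemma descents_insert_sum m a w :
  all (fun x : int => - m%:Z < x < m%:Z) (a :: w) ->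
  \sum_(j <- iota 0 (size w).+1) \sum_(b <- [:: true; false])
     'X^(descents a (insert w j (signed b m))) = eulerB_step (size w) 'X^(descents a w).
Proof.
elim: w a => [|x w IHw] a.
  case/andP=> /andP [gt_a lt_a] _.
  rewrite !big_cons !big_nil /insert /= /signed gt_a ltNge (ltW lt_a) eulerB_step_Xn /=.
  by rewrite expr0 expr1; ring.
case/andP=> /andP [gt_a lt_a] /[dup] xw_bound /andP [/andP [gt_x lt_x] _].
have -> : iota 0 (size (x :: w)).+1 = 0%N :: map (addn 1) (iota 0 (size w).+1).
  by rewrite -iotaDl.
rewrite big_cons big_map.
have shift : \sum_(j <- iota 0 (size w).+1) \sum_(b <- [:: true; false])
      'X^(descents a (insert (x :: w) (1 + j) (signed b m))) =
    'X^(nat_of_bool (x < a)%R) * eulerB_step (size w) 'X^(descents x w).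
  rewrite -(IHw x xw_bound) big_distrr; apply: eq_bigr => j _.
  by rewrite big_distrr; apply: eq_bigr => b _; rewrite add1n /insert /= exprD.
rewrite shift !big_cons big_nil /insert /= /signed gt_a lt_x.
rewrite (ltNge m%:Z a) (ltW lt_a) (ltNge x (- m%:Z)) (ltW gt_x).
rewrite !eulerB_step_Xn /=.
move: (descents x w) (size w) => k s; case: (x < a)%R; rewrite /= ?add0n ?add1n ?exprS; ring.
Qed.

Lemma absz_signed b m : absz (signed b m) = m.
Proof. by case: b; rewrite /signed ?abszN. Qed.

Lemma signed_absz (x : int) : x = signed (x < 0) (absz x).
Proof. by case: x => k //=; rewrite NegzE. Qed.

Lemma perm_insert w j x : perm_eq (insert w j x) (x :: w).
Proof. by rewrite /insert -[in X in perm_eq _ X](cat_take_drop j w) -cat1s perm_catCA. Qed.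

Lemma insert_rem_index (x : int) w : x \in w -> insert (rem x w) (index x w) x = w.
Proof.
move=> w_x; have le_iw : (index x w <= size w)%N by rewrite ltnW ?index_mem.
rewrite /insert remE take_size_cat ?drop_size_cat ?size_takel //.
by rewrite -[X in _ ++ X :: _](nth_index 0 w_x) -drop_nth ?index_mem ?cat_take_drop.
Qed.

Definition signed_word (n : nat) (w : seq int) : bool := perm_eq (map absz w) (iota 1 n).

Fixpoint signed_words (n : nat) : seq (seq int) :=
  if n is n'.+1 then
    [seq insert w jb.1 (signed jb.2 n) | w <- signed_words n',
       jb <- [seq (j, b) | j <- iota 0 n, b <- [:: true; false]]]
  else [:: [::]].

Lemma signed_wordsS n :
  signed_words n.+1 =
  [seq insert w jb.1 (signed jb.2 n.+1) | w <- signed_words n,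
     jb <- [seq (j, b) | j <- iota 0 n.+1, b <- [:: true; false]]].
Proof. by []. Qed.

Lemma signed_word_perm n w1 w2 : perm_eq w1 w2 -> signed_word n w1 = signed_word n w2.
Proof. by move=> w12; rewrite /signed_word (permPl (perm_map absz w12)). Qed.

Lemma signed_word_cons n x w : absz x = n.+1 -> signed_word n.+1 (x :: w) = signed_word n w.
Proof.
move=> absx; rewrite /signed_word -(addn1 n) iotaD.
by rewrite perm_sym perm_catC /= add1n absx perm_cons perm_sym.
Qed.

Lemma signed_word_size n w : signed_word n w -> size w = n.
Proof. by move=> sw; rewrite -(size_map absz) (perm_size sw) size_iota. Qed.

Lemma signed_word_absz n w y : signed_word n w -> y \in w -> (0 < absz y <= n)%N.
Proof.
move=> sw w_y; have : absz y \in iota 1 n by rewrite -(perm_mem sw) map_f.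
by rewrite mem_iota; lia.
Qed.

Lemma mem_allpairs_pair (S T : eqType) (s : seq S) (t : seq T) x y :
  ((x, y) \in [seq (x, y) | x <- s, y <- t]) = (x \in s) && (y \in t).
Proof.
apply/allpairsP/andP => [[[x' y'] [/= s_x t_y [-> ->]]] // | [s_x t_y]].
by exists (x, y).
Qed.

Lemma mem_signed_words n w : (w \in signed_words n) = signed_word n w.
Proof.
elim: n w => [|n IHn] w.
  by rewrite inE; apply/eqP/idP => [-> // | /signed_word_size/size0nil].
apply/idP/idP => [|sw].
  case/allpairsP => -[u [j b]] /= [u_in _ ->].
  by rewrite (signed_word_perm _ (perm_insert _ _ _)) signed_word_cons ?absz_signed -?IHn.
have /mapP [x w_x absx] : n.+1 \in map absz w by rewrite (perm_mem sw) mem_iota; lia.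
rewrite -(insert_rem_index w_x) [x in insert _ _ x]signed_absz -absx.
have slot_in : (index x w, x < 0) \in [seq (j, b) | j <- iota 0 n.+1, b <- [:: true; false]].
  rewrite mem_allpairs_pair mem_iota add0n -(signed_word_size sw) index_mem w_x.
  by case: (x < 0).
apply/allpairsP; exists (rem x w, (index x w, x < 0)); split=> //=.
by rewrite IHn -(signed_word_cons _ (esym absx)) -(signed_word_perm _ (perm_to_rem w_x)).
Qed.

Lemma find_insert m u j x : (j <= size u)%N -> absz x = m -> m \notin map absz u ->
  find (fun y : int => absz y == m) (insert u j x) = j.
Proof.
move=> le_ju absx m_u; rewrite /insert find_cat size_takel //= absx eqxx addn0.
by case: hasP => // -[y /mem_take u_y /eqP absy]; case/negP: m_u; rewrite -absy map_f.
Qed.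

Lemma rem_insert (x : int) u j : x \notin u -> rem x (insert u j x) = u.
Proof.
elim: u j => [|y u IHu] [|j]; rewrite /insert /= ?eqxx // inE negb_or eq_sym.
by case/andP=> /negbTE -> /IHu; rewrite /insert => ->.
Qed.

Lemma insert_inj m u1 u2 j1 j2 x1 x2 :
  (j1 <= size u1)%N -> (j2 <= size u2)%N -> absz x1 = m -> absz x2 = m ->
  m \notin map absz u1 -> m \notin map absz u2 ->
  insert u1 j1 x1 = insert u2 j2 x2 -> (u1, j1, x1) = (u2, j2, x2).
Proof.
move=> le_ju1 le_ju2 absx1 absx2 m_u1 m_u2 eq_ins.
have eq_j : j1 = j2.
  by rewrite -(find_insert le_ju1 absx1 m_u1) -(find_insert le_ju2 absx2 m_u2) eq_ins.
have eq_x : x1 = x2.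
  have := congr1 (fun s => nth 0 s j1) eq_ins.
  by rewrite /insert !nth_cat !size_takel // -eq_j ltnn subnn.
have notin u x : absz x = m -> m \notin map absz u -> x \notin u.
  by move=> absx; apply: contra => u_x; rewrite -absx map_f.
by rewrite -(rem_insert j1 (notin _ _ absx1 m_u1)) eq_ins eq_j eq_x rem_insert ?(notin _ _ absx2).
Qed.

Lemma signed_words_uniq n : uniq (signed_words n).
Proof.
elim: n => [//|n IHn]; apply: allpairs_uniq => //.
  by apply: allpairs_uniq; rewrite ?iota_uniq // => -[? ?] [? ?].
move=> [u1 [j1 b1]] [u2 [j2 b2]]; rewrite !mem_allpairs_pair !mem_iota !add0n !mem_signed_words.
case/and3P=> sw1 /andP [_ lt_j1] _ /and3P [sw2 /andP [_ lt_j2] _].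
have fresh u : signed_word n u -> n.+1 \notin map absz u.
  by move=> sw; rewrite (perm_mem sw) mem_iota; lia.
move/(insert_inj _ _ (absz_signed _ _) (absz_signed _ _) (fresh _ sw1) (fresh _ sw2)).
rewrite (signed_word_size sw1) (signed_word_size sw2) => /(_ lt_j1 lt_j2) [-> ->].
by case: b1; case: b2 => // /eqP; rewrite /signed; lia.
Qed.

Lemma signed_words_descents_step n :
  \sum_(w <- signed_words n.+1) 'X^(descents 0 w) =
  eulerB_step n (\sum_(w <- signed_words n) 'X^(descents 0 w)).
Proof.
rewrite signed_wordsS big_allpairs_dep eulerB_step_sum big_seq [RHS]big_seq.
apply: eq_bigr => w; rewrite mem_signed_words => sw.
have w_bounded : all (fun y : int => - n.+1%:Z < y < n.+1%:Z) (0 :: w).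
  apply/allP => y; rewrite inE => /predU1P [-> // | w_y].
  by have := signed_word_absz sw w_y; lia.
by rewrite big_allpairs; have := descents_insert_sum w_bounded; rewrite (signed_word_size sw).
Qed.

(** * Signed permutations as words *)

Definition perm_word n (s : {perm letter n}) : seq int := mkseq (fun j => sigmaB s j.+1) n.

Lemma sigmaB_ord n (s : {perm letter n}) (k : 'I_n) :
  sigmaB s k.+1 = letter_val (s (k, false)).
Proof. by rewrite /sigmaB valK. Qed.

Lemma nth_perm_word n (s : {perm letter n}) j : (j <= n)%N ->
  nth 0 (0 :: perm_word s) j = sigmaB s j.
Proof. by case: j => [//|j] lt_jn; rewrite /= nth_mkseq. Qed.

Lemma descents_count a w :
  descents a w = count (fun j => nth 0 (a :: w) j.+1 < nth 0 (a :: w) j) (iota 0 (size w)).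
Proof.
elim: w a => [//|x w IHw] a.
rewrite /= IHw.
have -> : iota 1 (size w) = map (addn 1) (iota 0 (size w)) by rewrite -iotaDl.
by rewrite count_map.
Qed.

Lemma desB_perm_word n (s : {perm letter n}) : desB s = descents 0 (perm_word s).
Proof.
rewrite descents_count size_mkseq /desB cardE /enum_mem size_filter -enumT.
rewrite -val_enum_ord count_map; apply: eq_count => k.
by rewrite /preim !inE (nth_perm_word s (ltn_ord k)) (nth_perm_word s (ltnW (ltn_ord k))).
Qed.

Lemma BnP n (s : {perm letter n}) :
  s \in Bn n -> forall x, s (letter_neg x) = letter_neg (s x).
Proof. by rewrite inE => /forallP Bs x; apply/eqP. Qed.

Lemma letter_valE n (l : letter n) : letter_val l = signed l.2 l.1.+1.
Proof. by []. Qed.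

Lemma letter_val_inj n : injective (@letter_val n).
Proof.
move=> [i b] [j c]; rewrite !letter_valE /=.
case: b; case: c; rewrite /signed => eq_ij;
  first [by congr pair; apply: ord_inj; lia | exfalso; lia].
Qed.

Lemma Bn_fst_inj n (s : {perm letter n}) x y :
  s \in Bn n -> (s x).1 = (s y).1 -> x.1 = y.1.
Proof.
move=> Bs eq_fst; have : s y \in [:: s x; s (letter_neg x)].
  rewrite (BnP Bs) !inE /letter_neg.
  by case: (s x) (s y) eq_fst => [i b] [j c] /= ->; rewrite !xpair_eqE eqxx; case: b; case: c.
by rewrite !inE !(inj_eq perm_inj) => /orP [] /eqP ->.
Qed.

Lemma perm_word_inj n : {in Bn n &, injective (@perm_word n)}.
Proof.
move=> s1 s2 Bs1 Bs2 eq_w; apply/permP => -[k b].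
have eq_pos : s1 (k, false) = s2 (k, false).
  apply: letter_val_inj; rewrite -!sigmaB_ord.
  have := congr1 (fun w => nth 0 (0 :: w) k.+1) eq_w.
  by rewrite !nth_perm_word.
case: b => //; rewrite -[(k, true)]/(letter_neg (k, false)).
by rewrite (BnP Bs1) (BnP Bs2) eq_pos.
Qed.

Lemma perm_word_signed n (s : {perm letter n}) : s \in Bn n -> signed_word n (perm_word s).
Proof.
move=> Bs; pose pos k := (s (k, false)).1.
have pos_inj : injective pos by move=> k1 k2 /(Bn_fst_inj Bs).
have pos_perm : perm_eq (map pos (enum 'I_n)) (enum 'I_n).
  apply: uniq_perm; [by rewrite map_inj_uniq ?enum_uniq | exact: enum_uniq |].
  by move=> k; rewrite mem_enum -codomE; apply: inj_card_onto.
rewrite /signed_word.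
have -> : map absz (perm_word s) = map (succn \o val) (map pos (enum 'I_n)).
  rewrite /perm_word /mkseq -val_enum_ord -!map_comp; apply: eq_map => k /=.
  by rewrite valK letter_valE absz_signed.
by rewrite (permPl (perm_map _ pos_perm)) map_comp val_enum_ord -(iotaDl 1 0).
Qed.

Section PermOfWord.

Variables (n : nat) (w : seq int).
Hypothesis w_signed : signed_word n w.

Definition word_letter (x : letter n) : letter n :=
  (odflt x.1 (insub (absz (nth 0 w x.1)).-1), x.2 (+) (nth 0 w x.1 < 0)).

Lemma word_absz (k : 'I_n) : (0 < absz (nth 0%R w k) <= n)%N.
Proof. by apply: (signed_word_absz w_signed); rewrite mem_nth ?(signed_word_size w_signed). Qed.

Lemma val_word_letter x : (val (word_letter x).1).+1 = absz (nth 0 w x.1).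
Proof.
rewrite /=; case: insubP => [k _ -> | /negP []]; have := word_absz x.1;
  by case: (absz _) => [|a] //= /andP [_ le_an].
Qed.

Lemma word_letter_inj : injective word_letter.
Proof.
move=> [i b] [j c] eq_wl.
have eq_absz : absz (nth 0 w i) = absz (nth 0 w j).
  by have := congr1 (fun l => (val l.1).+1) eq_wl; rewrite !val_word_letter.
have uniq_absz : uniq (map absz w) by rewrite (perm_uniq w_signed) iota_uniq.
have eq_ij : i = j.
  have size_w := signed_word_size w_signed.
  apply: ord_inj; apply/eqP; rewrite -(nth_uniq 0%N _ _ uniq_absz) ?size_map ?size_w //.
  by rewrite !(nth_map 0) ?size_w // eq_absz.
move: eq_wl; rewrite /word_letter eq_ij /= => -[].
by case: b; case: c; case: (nth 0 w j < 0).
Qed.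

Lemma letter_val_word_letter (k : 'I_n) : letter_val (word_letter (k, false)) = nth 0 w k.
Proof. by rewrite letter_valE val_word_letter -signed_absz. Qed.

Lemma perm_word_surj : exists2 s, s \in Bn n & perm_word s = w.
Proof.
exists (perm word_letter_inj).
  by rewrite inE; apply/forallP => x; rewrite !permE /word_letter /letter_neg /= addNb.
apply: (@eq_from_nth _ 0) => [|j]; rewrite size_mkseq ?(signed_word_size w_signed) // => lt_jn.
by rewrite nth_mkseq // -[j]/(val (Ordinal lt_jn)) sigmaB_ord permE letter_val_word_letter.
Qed.

End PermOfWord.

Lemma BEuler_signed_words n : BEuler n = \sum_(w <- signed_words n) 'X^(descents 0 w).
Proof.
rewrite /BEuler -big_enum /=.
under eq_bigr do rewrite desB_perm_word.
rewrite -(big_map (@perm_word n) xpredT (fun w => 'X^(descents 0 w))).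
apply: perm_big; apply: uniq_perm.
- by rewrite map_inj_in_uniq ?enum_uniq // => s1 s2; rewrite !mem_enum; apply: perm_word_inj.
- exact: signed_words_uniq.
move=> w; rewrite mem_signed_words; apply/mapP/idP => [[s] | /perm_word_surj [s Bs <-]].
  by rewrite mem_enum => Bs ->; apply: perm_word_signed.
by exists s; rewrite ?mem_enum.
Qed.

Lemma BEuler_gamma_poly n : BEuler n = gamma_poly n.
Proof.
elim: n => [|n IHn].
  by rewrite BEuler_signed_words /gamma_poly big_nat1 big_seq1 /gamma_basis !expr0 !mul1r.
by rewrite BEuler_signed_words signed_words_descents_step -BEuler_signed_words IHn gamma_poly_step.
Qed.

Lemma gammaB_gammaN n i : gammaB n i = (gammaN n i)%:Z.
Proof.
have gammaN_vector : is_gamma_vector n (fun j => (gammaN n j)%:Z).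
  by split=> [j /gammaN_eq0 -> // |]; rewrite BEuler_gamma_poly gamma_polyE.
exact: gammaB_unique gammaN_vector i.
Qed.

Lemma gammaN_growth n i : ((2 * i + 1) * gammaN n i <= gammaN n.+1 i)%N.
Proof.
case: i => [|j] /=; first by rewrite mul1n.
by rewrite (_ : 2 * j.+1 + 1 = 2 * j + 3)%N ?leq_addr //; lia.
Qed.

(* The bound holds for every [i], since [i + 1 <= 2 * i + 1]. *)
Theorem lemma2p4 (n i : nat) :
  (1 <= n)%N -> (1 <= i <= n./2)%N ->
  (i.+1)%:Z * gammaB n.-1 i <= gammaB n i.
Proof.
case: n => [//|n] _ _ /=.
rewrite !gammaB_gammaN -PoszM lez_nat.
apply: leq_trans (gammaN_growth n i).
by rewrite leq_mul2r (_ : i.+1 <= 2 * i + 1)%N ?orbT //; lia.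
Qed.
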